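(* Assume the standing assumptions and Assumption (T). Let $\bar u\in V$, $\epsilon>0$, and let $u_\epsilon\in V$ satisfy \[ \alpha\langle u_\epsilon,v\rangle_V+\beta G_\epsilon'(u_\epsilon)v+\langle u_\epsilon-\bar u,v\rangle_{L^2(\Omega)}=-F'(u_\epsilon)v\qquad\forall v\in V, \] where $F'(u_\epsilon)$ is represented by a function in $L^1(\Omega)$, i.e. $F'(u_\epsilon)v=\int_\Omega F'(u_\epsilon)\,v\,dx$ for $v\in V\cap L^\infty(\Omega)$. Let $\lambda_\epsilon:=2u_\epsilon\psi_\epsilon'(u_\epsilon^2)$ (the function representing $G_\epsilon'(u_\epsilon)$). Then \[ \beta\|\lambda_\epsilon\|_{L^1(\Omega)}\le\|F'(u_\epsilon)\|_{L^1(\Omega)}+\|\bar u\|_{L^1(\Omega)} . \]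
   Context: Standing assumptions: $\Omega\subset\mathbb R^d$ bounded Lipschitz domain; $V$ real Hilbert space with inner product $\langle\cdot,\cdot\rangle_V$, $V\subset L^2(\Omega)$ with compact and dense embedding; $F:V\to\mathbb R$ weakly lower semicontinuous, bounded below by an affine function, continuously Fréchet differentiable. $\alpha>0$, $\beta>0$, $p\in(0,1)$. For $\epsilon>0$, $\psi_\epsilon(t)=\frac p2\frac{t}{\epsilon^{2-p}}+(1-\frac p2)\epsilon^p$ if $t\in[0,\epsilon^2)$ and $\psi_\epsilon(t)=t^{p/2}$ if $t\ge\epsilon^2$, $\psi_\epsilon'(t)=\frac p2\min(\epsilon^{p-2},t^{(p-2)/2})$; $G_\epsilon(u)=\int_\Omega\psi_\epsilon(|u|^2)dx$, $G_\epsilon'(u)v=\int_\Omega 2u\psi_\epsilon'(u^2)v\,dx$. Assumption (T): (i) for every $u\in V$ the function $v:=\max(-1,\min(u,1))$ belongs to $V$ and satisfies $\langle u,v\rangle_V\ge\|v\|_V^2$; (ii) $C_0(\Omega)\cap V$ is dense in $V$ and in $C_0(\Omega)$ with respect to their norms. *)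

From HB Require Import structures.
From mathcomp Require Import all_boot all_order all_algebra.
From mathcomp Require Import all_classical all_reals all_analysis.
Set Implicit Arguments.
Unset Strict Implicit.
Unset Printing Implicit Defensive.
Import Order.TTheory GRing.Theory Num.Theory.
Import numFieldNormedType.Exports.
Local Open Scope classical_set_scope.
Local Open Scope ring_scope.

Section Geometry.
Context {R : realType} {d : nat}.
Local Notation pt := (d.-tuple R).

Definition tsub (x y : pt) : pt := [tuple tnth x i - tnth y i | i < d].
Definition tscale (a : R) (x : pt) : pt := [tuple a * tnth x i | i < d].
Definition tdot (x y : pt) : R := \sum_(i < d) tnth x i * tnth y i.
Definition edist (x y : pt) : R := Num.sqrt (tdot (tsub x y) (tsub x y)).

Definition eopen (A : set pt) : Prop :=
  forall x, A x -> exists2 r : R, 0 < r & forall y, edist x y < r -> A y.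

Definition ebounded (A : set pt) : Prop :=
  exists M : R, forall x, A x -> forall i, `|tnth x i| <= M.

Definition econnected (A : set pt) : Prop :=
  A !=set0 /\
  forall B C : set pt, eopen B -> eopen C -> A `<=` B `|` C ->
    A `&` B `&` C = set0 -> A `&` B = set0 \/ A `&` C = set0.

Definition eboundary (A : set pt) (x0 : pt) : Prop :=
  ~ A x0 /\ forall r : R, 0 < r -> exists y, A y /\ edist x0 y < r.

(** Bounded Lipschitz domain: bounded, open, connected, and near every
    boundary point x0 it lies (in a suitably rotated coordinate system with
    last axis the unit vector nu) below the graph of a Lipschitz function
    phi defined on the hyperplane orthogonal to nu. *)
Definition bounded_lipschitz_domain (A : set pt) : Prop :=
  [/\ eopen A, ebounded A, econnected A &
   forall x0, eboundary A x0 ->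
     exists r : R, exists nu : pt, exists phi : pt -> R, exists L : R,
      [/\ 0 < r, tdot nu nu = 1,
       (forall y z, tdot y nu = 0 -> tdot z nu = 0 ->
          `|phi y - phi z| <= L * edist y z) &
       forall x, edist x x0 < r ->
         (A x <-> tdot (tsub x x0) nu
                   < phi (tsub (tsub x x0) (tscale (tdot (tsub x x0) nu) nu)))]].

Definition box (a b : pt) : set pt :=
  [set x | forall i, tnth a i <= tnth x i <= tnth b i].

(** mu is the Lebesgue measure on (the Borel sets of) R^d: it is determined
    by its values on boxes. *)
Definition is_lebesgue_measure (mu : {measure set pt -> \bar R}) : Prop :=
  forall a b : pt, (forall i, tnth a i <= tnth b i) ->
    mu (box a b) = (\prod_(i < d) (tnth b i - tnth a i))%:E.

Definition L2fun (mu : {measure set pt -> \bar R}) (O : set pt) (f : pt -> R) : Prop :=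
  measurable_fun O f /\ mu.-integrable O (fun x => (f x ^+ 2)%:E).

Definition econt_on (O : set pt) (f : pt -> R) : Prop :=
  forall x, O x -> forall e : R, 0 < e -> exists2 r : R, 0 < r &
    forall y, O y -> edist x y < r -> `|f y - f x| < e.

(** C_0(O): continuous on O and vanishing at the boundary of O
    ({|f| >= e} stays at positive distance from the complement of O). *)
Definition C0fun (O : set pt) (f : pt -> R) : Prop :=
  econt_on O f /\
  forall e : R, 0 < e -> exists2 r : R, 0 < r &
    forall x, O x -> e <= `|f x| -> forall y, ~ O y -> r <= edist x y.

End Geometry.

Section Hilbert.
Context {R : realType}.

(** ip is an inner product on V inducing its norm (V complete => Hilbert). *)
Definition inner_product_of (V : normedModType R) (ip : V -> V -> R) : Prop :=
  [/\ forall (a : R) (u v w : V), ip (a *: u + v) w = a * ip u w + ip v w,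
      forall u v : V, ip u v = ip v u &
      forall u : V, ip u u = `|u| ^+ 2].

Context {d : nat}.
Local Notation pt := (d.-tuple R).

(** iota : V -> L^2(O) is a linear, injective, compact embedding with dense
    range (iota u is a representative of the L^2 class of u). *)
Definition compact_dense_embedding (mu : {measure set pt -> \bar R})
    (O : set pt) (V : normedModType R) (iota : V -> pt -> R) : Prop :=
  [/\ forall u, L2fun mu O (iota u),
      forall (a : R) (u v : V),
        {ae mu, forall x, O x -> iota (a *: u + v) x = a * iota u x + iota v x},
      forall u, {ae mu, forall x, O x -> iota u x = 0} -> u = 0,
      (forall un : nat -> V, (exists M : R, forall n, `|un n| <= M) ->
        exists (phi : nat -> nat) (g : pt -> R),
          [/\ {homo phi : m n / (m < n)%N >-> (m < n)%N}, L2fun mu O g &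
              (fun n => (\int[mu]_(x in O) ((iota (un (phi n)) x - g x) ^+ 2)%:E)%E)
                @ \oo --> 0%E]) &
      forall g, L2fun mu O g -> forall e : R, 0 < e ->
        exists u, (\int[mu]_(x in O) ((iota u x - g x) ^+ 2)%:E < e%:E)%E].

Definition clip (t : R) : R := Num.max (-1) (Num.min t 1).

(** Assumption (T), the space V being identified with its image in L^2(O). *)
Definition assumption_T (mu : {measure set pt -> \bar R}) (O : set pt)
    (V : normedModType R) (ip : V -> V -> R) (iota : V -> pt -> R) : Prop :=
  [/\
      forall u : V, exists v : V,
        {ae mu, forall x, O x -> iota v x = clip (iota u x)} /\ `|v| ^+ 2 <= ip u v,
      forall (u : V) (e : R), 0 < e -> exists (w : V) (c : pt -> R),
        [/\ C0fun O c, {ae mu, forall x, O x -> iota w x = c x} & `|u - w| < e] &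
      forall c : pt -> R, C0fun O c -> forall e : R, 0 < e ->
        exists (w : V) (c' : pt -> R),
        [/\ C0fun O c', {ae mu, forall x, O x -> iota w x = c' x} &
            exists2 eta : R, eta < e & forall x, O x -> `|c x - c' x| <= eta]].

Definition weakly_lsc (V : normedModType R) (ip : V -> V -> R) (F : V -> R) : Prop :=
  forall (un : nat -> V) (u : V),
    (forall w, (fun n => ip (un n) w) @ \oo --> ip u w) ->
    ((F u)%:E <= limn_einf (fun n => (F (un n))%:E))%E.

Definition affine_minorant (V : normedModType R) (ip : V -> V -> R) (F : V -> R) : Prop :=
  exists (w : V) (c : R), forall u, ip w u + c <= F u.

Definition C1_frechet (V : normedModType R) (F : V -> R) : Prop :=
  (forall u : V, differentiable F u) /\
  forall (u : V) (e : R), 0 < e -> exists2 r : R, 0 < r &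
    forall u' : V, `|u' - u| < r -> forall h : V, `|'d F u' h - 'd F u h| <= e * `|h|.

(** psi_eps and its derivative (psi_eps' (0) = p/2 eps^(p-2), the value of
    the min at t = 0 where t^((p-2)/2) = +oo) *)
Definition psi_eps (p eps t : R) : R :=
  if t < eps ^+ 2 then p / 2 * (t / eps `^ (2 - p)) + (1 - p / 2) * eps `^ p
  else t `^ (p / 2).

Definition dpsi_eps (p eps t : R) : R :=
  if t <= 0 then p / 2 * eps `^ (p - 2)
  else p / 2 * Num.min (eps `^ (p - 2)) (t `^ ((p - 2) / 2)).

Definition G_eps (mu : {measure set pt -> \bar R}) (O : set pt) (p eps : R)
    (u : pt -> R) : R :=
  Rintegral mu O (fun x => psi_eps p eps (`|u x| ^+ 2)).

Definition dG_eps (mu : {measure set pt -> \bar R}) (O : set pt) (p eps : R)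
    (u v : pt -> R) : R :=
  Rintegral mu O (fun x => 2 * u x * dpsi_eps p eps (u x ^+ 2) * v x).

End Hilbert.

From Pilot Require Import Defs.
From HB Require Import structures.
From mathcomp Require Import all_boot all_order all_algebra.
From mathcomp Require Import all_classical all_reals all_analysis.
From mathcomp Require Import lra ring.
Set Implicit Arguments.
Unset Strict Implicit.
Unset Printing Implicit Defensive.
Import Order.TTheory GRing.Theory Num.Theory.
Import numFieldNormedType.Exports.
Local Open Scope classical_set_scope.
Local Open Scope ring_scope.
Import measurable_realfun.

(* Test the optimality system with v = clip (u_eps / dl): Assumption (T)(i)
   puts it in V with <u_eps, v>_V >= 0, and u_eps * v >= 0.  Since lambda_eps
   has the sign of u_eps and |lambda_eps| <= p eps^(p-2) |u_eps|, pointwise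
   |lambda_eps| <= lambda_eps * v + p eps^(p-2) dl, while the remaining terms
   of the tested equation are bounded by ||F'(u_eps)||_1 + ||ubar||_1.
   Integrating over the bounded domain and letting dl -> 0 gives the claim. *)

Section Clip.
Variable R : realType.
Implicit Types t x l C dl : R.

Lemma clipE t : clip t = if t <= -1 then -1 else if 1 <= t then 1 else t.
Proof.
rewrite /clip -[Num.min _ _]/(Order.min t 1) -[Num.max _ _]/(Order.max (-1) _).
rewrite minEle maxEle.
case: (leP t 1) => h1; case: (leP t (-1)) => h2; case: (leP 1 t) => h3 //;
  case: ifP => h4 //; lra.
Qed.

Lemma normr_clip_le1 t : `|clip t| <= 1.
Proof.
rewrite clipE; case: (leP t (-1)) => h1; first by rewrite normrN normr1.
case: (leP 1 t) => h2; first by rewrite normr1.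
by rewrite ler_norml; apply/andP; split; lra.
Qed.

Lemma mulr_clip_div_ge0 x dl : 0 < dl -> 0 <= x * clip (x / dl).
Proof.
move=> dl0; rewrite -[x in x * _](divfK (lt0r_neq0 dl0)) mulrAC; move: (x / dl) => y.
by rewrite clipE; case: (leP y (-1)) => h1; [|case: (leP 1 y) => h2]; nra.
Qed.

(* Outside [-dl, dl] the truncation [clip (x / dl)] is the sign of [x], hence of [l]. *)
Lemma normr_le_mul_clip l x C dl : 0 <= l * x -> 0 <= C -> `|l| <= C * `|x| ->
  0 < dl -> `|l| <= l * clip (x / dl) + C * dl.
Proof.
move=> lx C0 lC dl0; have Cdl : 0 <= C * dl by apply: mulr_ge0 C0 (ltW dl0).
have xE : x = x / dl * dl by rewrite divfK ?lt0r_neq0.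
move: lx lC; rewrite {1 2}xE; move: (x / dl) => y lx lC.
rewrite clipE; case: (leP y (-1)) => y1; [|case: (leP 1 y) => y2].
- have ydl : y * dl < 0 by nra.
  by rewrite ler0_norm; nra.
- have ydl : 0 < y * dl by nra.
  by rewrite ger0_norm; nra.
- have : `|l| <= C * dl.
    apply: le_trans lC _; rewrite ler_wpM2l // normrM (ger0_norm (ltW dl0)).
    by apply: ler_piMl (ltW dl0) _; rewrite ler_norml; lra.
  have ly : 0 <= l * y by move: lx; rewrite mulrA pmulr_lge0.
  lra.
Qed.

End Clip.

Lemma measurable_clip (R : realType) : measurable_fun [set: R] clip.
Proof.
apply: (measurable_maxr (f := cst (-1))); first exact: measurable_cst.
by apply: (measurable_minr (g := cst 1)) => //; exact: measurable_cst.
Qed.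

Section DpsiEps.
Variables (R : realType) (p eps : R).
Hypothesis p_ge0 : 0 <= p.

Lemma dpsi_eps_ge0 t : 0 <= dpsi_eps p eps t.
Proof.
rewrite /dpsi_eps; case: ifP => _; rewrite mulr_ge0 ?divr_ge0 ?powR_ge0 //.
by rewrite le_min !powR_ge0.
Qed.

Lemma dpsi_eps_le t : dpsi_eps p eps t <= p / 2 * eps `^ (p - 2).
Proof.
rewrite /dpsi_eps; case: ifP => _ //.
by rewrite ler_wpM2l ?divr_ge0 // ge_min lexx.
Qed.

Lemma mul_dpsi_eps_ge0 t : 0 <= 2 * t * dpsi_eps p eps (t ^+ 2) * t.
Proof.
rewrite mulrAC -(mulrA 2) -expr2.
by apply: mulr_ge0; [apply: mulr_ge0 => //; exact: sqr_ge0|exact: dpsi_eps_ge0].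
Qed.

Lemma normr_dpsi_eps_le t :
  `|2 * t * dpsi_eps p eps (t ^+ 2)| <= p * eps `^ (p - 2) * `|t|.
Proof.
rewrite mulrAC normrM ler_wpM2r // normrM normr_nat ger0_norm ?dpsi_eps_ge0 //.
have -> : p * eps `^ (p - 2) = 2 * (p / 2 * eps `^ (p - 2)) by field.
by rewrite ler_pM2l // dpsi_eps_le.
Qed.

Lemma measurable_dpsi_eps : measurable_fun [set: R] (dpsi_eps p eps).
Proof.
apply: measurable_fun_ifT; first exact: measurable_fun_ler.
  exact: measurable_cst.
apply: measurable_funM; first exact: measurable_cst.
by apply: (measurable_minr (f := cst (eps `^ (p - 2)))) => //; exact: measurable_powR.
Qed.

End DpsiEps.

Section Euclidean.
Context {R : realType} {d : nat}.
Local Notation pt := (d.-tuple R).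

Lemma measurable_coordinatewise (P : 'I_d -> set R) :
  (forall i, measurable (P i)) -> measurable [set x : pt | forall i, P i (tnth x i)].
Proof.
move=> mP; rewrite (_ : [set x | _] = \bigcap_(i in [set: 'I_d]) [set x : pt | P i (tnth x i)]).
  apply: fin_bigcap_measurable; first exact: finite_finset.
  by move=> i _; have := measurable_tnth i measurableT (mP i); rewrite setTI.
by apply/seteqP; split => x /= h i //; move=> *; exact: h.
Qed.

Definition open_cube (c : 'I_d -> R) (s : R) : set pt :=
  [set x | forall i, `|tnth x i - c i| < s].

Lemma measurable_open_cube c s : measurable (open_cube c s).
Proof.
rewrite (_ : open_cube _ _ = [set x | forall i, `](c i - s), (c i + s)[%classic (tnth x i)]).
  by apply: (measurable_coordinatewise (P := fun i => `](c i - s), (c i + s)[%classic)).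
by apply/seteqP; split => x /= h i; move: (h i); rewrite /= in_itv /= ltr_distl.
Qed.

Lemma measurable_box (a b : pt) : measurable (Defs.box a b).
Proof.
rewrite (_ : Defs.box a b = [set x | forall i, `[tnth a i, tnth b i]%classic (tnth x i)]).
  by apply: (measurable_coordinatewise (P := fun i => `[tnth a i, tnth b i]%classic)).
by apply/seteqP; split => x /= h i; move: (h i); rewrite /= in_itv.
Qed.

Lemma edist_lt_coordinatewise (x y : pt) (e r : R) : 0 <= e ->
  (forall i, `|tnth x i - tnth y i| <= e) -> (d.+1)%:R * e < r -> Defs.edist x y < r.
Proof.
move=> e0 hxy er; have r0 : 0 < r by apply: le_lt_trans er; exact: mulr_ge0.
have dot_le : tdot (tsub x y) (tsub x y) <= d%:R * e ^+ 2.
  rewrite /tdot mulr_natl -[d in _ *+ d]card_ord -sumr_const.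
  apply: ler_sum => i _; rewrite /tsub tnth_mktuple -expr2 -real_normK ?num_real //.
  by rewrite lerXn2r ?nnegrE ?normr_ge0.
rewrite /Defs.edist -(gtr0_norm r0) -sqrtr_sqr ltr_sqrt ?exprn_gt0 //.
apply: (le_lt_trans dot_le); apply: le_lt_trans (_ : ((d.+1)%:R * e) ^+ 2 < r ^+ 2).
  by rewrite exprMn ler_wpM2r ?sqr_ge0 // -natrX ler_nat (leq_trans (leqnSn d)) // leq_pmulr.
by rewrite ltrXn2r ?nnegrE ?mulr_ge0 // ltW.
Qed.

(* Every point of an open set lies in a cube with rational center and side inside it. *)
Lemma eopen_measurable (O : set pt) : eopen O -> measurable O.
Proof.
move=> oO; pose cube (qs : d.-tuple rat * rat) :=
  open_cube (fun i => ratr (tnth qs.1 i)) (ratr qs.2).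
have -> : O = \bigcup_(qs in [set qs | cube qs `<=` O]) cube qs.
  apply/seteqP; split=> [x Ox|x [qs sub]]; last exact: sub.
  have [r r0 ballr] := oO x Ox.
  have [s] : exists s : rat, ratr s \in `]0, r / (2 * (d.+1)%:R)[.
    by apply: rat_in_itvoo; rewrite divr_gt0.
  rewrite in_itv /= => /andP[s0 sr].
  have near_q i : exists q : rat, `|tnth x i - ratr q| < ratr s.
    have [q] := @rat_in_itvoo R (tnth x i - ratr s) (tnth x i + ratr s) ltac:(lra).
    by rewrite in_itv /= => hq; exists q; rewrite ltr_distlC.
  have [q hq] := boolp.choice near_q.
  exists ([tuple q i | i < d], s); last by move=> i /=; rewrite tnth_mktuple.
  move=> y /= hy; apply: ballr; apply: (@edist_lt_coordinatewise _ _ (2 * ratr s)).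
  - by rewrite mulr_ge0 // ltW.
  - move=> i; have := hy i; have := hq i; rewrite tnth_mktuple => h1 h2.
    by have := ler_distD (ratr (q i)) (tnth x i) (tnth y i); rewrite (distrC (ratr (q i))); lra.
  - by move: sr; rewrite ltr_pdivlMr ?mulr_gt0 //; lra.
rewrite bigcup_mkcond; apply: countable_bigcupT_measurable => [|qs].
  exact: countableP.
by case: ifP => _; [exact: measurable_open_cube|exact: measurable0].
Qed.

Lemma ebounded_measure_lty (mu : {measure set pt -> \bar R}) (O : set pt) :
  is_lebesgue_measure mu -> ebounded O -> measurable O -> (mu O < +oo)%E.
Proof.
move=> hmu [M hM] mO; pose a : pt := [tuple - `|M| | _ < d]; pose b : pt := [tuple `|M| | _ < d].
have sub : O `<=` Defs.box a b.
  move=> x Ox i; rewrite !tnth_mktuple -ler_norml.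
  exact: le_trans (hM x Ox i) (ler_norm M).
apply: (le_lt_trans (le_measure mu (mem_set mO) (mem_set (measurable_box a b)) sub)).
have hab i : tnth a i <= tnth b i by rewrite !tnth_mktuple; have := normr_ge0 M; lra.
by move: (hmu a b hab); rewrite /= => ->; rewrite ltry.
Qed.

End Euclidean.

Lemma ler_addgt0_mulPr (R : realFieldType) (x y K : R) : 0 <= K ->
  (forall e, 0 < e -> x <= y + e * K) -> x <= y.
Proof.
move=> K0 xy; apply/ler_addgt0Pr => e e0; have K1 : 0 < K + 1 by rewrite ltr_wpDl.
apply: le_trans (xy (e / (K + 1)) _) _; first by rewrite divr_gt0.
by rewrite lerD2l mulrAC ler_pdivrMr // ler_pM2l // lerDl.
Qed.

Section FiniteMeasureIntegration.
Context {R : realType} {d : nat}.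
Local Notation pt := (d.-tuple R).
Variables (mu : {measure set pt -> \bar R}) (O : set pt).
Hypotheses (mO : measurable O) (Ofin : (mu O < +oo)%E).
Implicit Types f h k lam u b g w : pt -> R.

Lemma integrable_cst (c : R) : mu.-integrable O (EFin \o cst c).
Proof. exact: measurable_bounded_integrable (measurable_cst c) (bounded_cst c O). Qed.

Lemma le_integrableR f h : measurable_fun O f -> (forall x, O x -> `|f x| <= `|h x|) ->
  mu.-integrable O (EFin \o h) -> mu.-integrable O (EFin \o f).
Proof. by move=> mf fh; apply: le_integrable => //; exact/measurable_EFinP. Qed.

Lemma L2fun_integrable f : L2fun mu O f -> mu.-integrable O (EFin \o f).
Proof.
move=> [mf int2]; apply: (@le_integrableR _ (fun x => f x ^+ 2 + 1)).
- exact: mf.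
- move=> x _; rewrite [X in _ <= X]ger0_norm; last by have := sqr_ge0 (f x); lra.
  by case: (lerP 0 (f x)) => fx; [rewrite ger0_norm|rewrite ltr0_norm]; nra.
- apply: eq_integrable mO _ _ _ (integrableD mO int2 (integrable_cst 1)) => x _.
  by rewrite /= EFinD.
Qed.

Lemma integrableM_le1 f k : measurable_fun O f -> measurable_fun O k ->
  (forall x, O x -> `|k x| <= 1) -> mu.-integrable O (EFin \o f) ->
  mu.-integrable O (EFin \o (fun x => f x * k x)).
Proof.
move=> mf mk k1; apply: le_integrableR; first exact: measurable_funM.
move=> x Ox; rewrite normrM -[X in _ <= X]mulr1 ler_wpM2l //; exact: k1.
Qed.

Lemma normr_RintegralM_le1 f k : measurable_fun O f -> measurable_fun O k ->
  (forall x, O x -> `|k x| <= 1) -> mu.-integrable O (EFin \o f) ->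
  `|Rintegral mu O (fun x => f x * k x)| <= Rintegral mu O (fun x => `|f x|).
Proof.
move=> mf mk k1 intf; have intfk := integrableM_le1 mf mk k1 intf.
apply: le_trans (le_normr_Rintegral mO intfk) _.
apply: le_Rintegral => //; [exact: integrable_norm|exact: integrable_norm|].
move=> x Ox /=; rewrite normrM -[X in _ <= X]mulr1 ler_wpM2l //; exact: k1.
Qed.

Lemma ae_eq_Rintegral f h : measurable_fun O f -> measurable_fun O h ->
  {ae mu, forall x, O x -> f x = h x} -> Rintegral mu O f = Rintegral mu O h.
Proof.
move=> mf mh fh; congr fine; apply: ae_eq_integral => //; try exact/measurable_EFinP.
by apply: filterS fh => x fhx Ox /=; rewrite fhx.
Qed.

Lemma ae_eq_RintegralMr h w k : measurable_fun O h -> measurable_fun O w ->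
  measurable_fun O k -> {ae mu, forall x, O x -> w x = k x} ->
  Rintegral mu O (fun x => h x * w x) = Rintegral mu O (fun x => h x * k x).
Proof.
move=> mh mw mk wk; apply: ae_eq_Rintegral; try exact: measurable_funM.
by apply: filterS wk => x wkx Ox; rewrite wkx.
Qed.

Lemma Rintegral_norm_le_add_cst f h (c : R) :
  mu.-integrable O (EFin \o f) -> mu.-integrable O (EFin \o h) ->
  (forall x, O x -> `|f x| <= h x + c) ->
  Rintegral mu O (fun x => `|f x|) <= Rintegral mu O h + c * fine (mu O).
Proof.
move=> intf inth fhc; rewrite -Rintegral_cst // -RintegralD //; last first.
  exact: integrable_cst.
apply: le_Rintegral => //; first exact: integrable_norm.
exact: integrableD inth (integrable_cst c).
Qed.

Lemma le_Rintegral_test_equation (A X : R) u b g k :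
  measurable_fun O u -> measurable_fun O b -> measurable_fun O g ->
  measurable_fun O k -> mu.-integrable O (EFin \o u) ->
  mu.-integrable O (EFin \o b) -> mu.-integrable O (EFin \o g) ->
  (forall x, O x -> `|k x| <= 1) -> (forall x, O x -> 0 <= u x * k x) -> 0 <= A ->
  A + X + Rintegral mu O (fun x => (u x - b x) * k x) =
    - Rintegral mu O (fun x => g x * k x) ->
  X <= Rintegral mu O (fun x => `|g x|) + Rintegral mu O (fun x => `|b x|).
Proof.
move=> mu_ mb mg mk intu intb intg k1 uk0 A0 eqX.
have uk_ge0 : 0 <= Rintegral mu O (fun x => u x * k x) by exact: Rintegral_ge0.
have gk_le := normr_RintegralM_le1 mg mk k1 intg.
have bk_le := normr_RintegralM_le1 mb mk k1 intb.
move: eqX; under eq_Rintegral do rewrite mulrBl.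
rewrite RintegralB //; try exact: integrableM_le1.
move: gk_le bk_le; rewrite !ler_norml => /andP[gk_ge _] /andP[_ bk_le]; lra.
Qed.

Lemma le_Rintegral_norm_of_clip_tests (beta C : R) lam u b g :
  0 <= beta -> 0 <= C -> measurable_fun O lam -> measurable_fun O u ->
  measurable_fun O b -> measurable_fun O g -> mu.-integrable O (EFin \o u) ->
  mu.-integrable O (EFin \o b) -> mu.-integrable O (EFin \o g) ->
  (forall x, O x -> 0 <= lam x * u x) -> (forall x, O x -> `|lam x| <= C * `|u x|) ->
  (forall dl, 0 < dl -> exists2 A, 0 <= A &
    A + beta * Rintegral mu O (fun x => lam x * clip (u x / dl))
      + Rintegral mu O (fun x => (u x - b x) * clip (u x / dl))
    = - Rintegral mu O (fun x => g x * clip (u x / dl))) ->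
  beta * Rintegral mu O (fun x => `|lam x|)
    <= Rintegral mu O (fun x => `|g x|) + Rintegral mu O (fun x => `|b x|).
Proof.
move=> beta0 C0 mlam mu_ mb mg intu intb intg lam_u lamC tests.
have intlam : mu.-integrable O (EFin \o lam).
  apply: (le_integrableR (h := fun x => C * u x)) => // [x Ox|].
    by rewrite normrM (ger0_norm C0); exact: lamC.
  apply: eq_integrable mO _ _ _ (integrableZl mO C intu) => x _.
  by rewrite /= EFinM.
have K0 : 0 <= beta * (C * fine (mu O)).
  by rewrite mulr_ge0 // mulr_ge0 // fine_ge0 // measure_ge0.
apply: (ler_addgt0_mulPr K0) => dl dl0; pose k x := clip (u x / dl).
have mk : measurable_fun O k.
  by apply: measurableT_comp (@measurable_clip R) _; exact: measurable_funM.
have k1 x : O x -> `|k x| <= 1 by move=> _; exact: normr_clip_le1.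
have [A A0 eqA] := tests dl dl0.
have test := le_Rintegral_test_equation mu_ mb mg mk intu intb intg k1
  (fun x _ => mulr_clip_div_ge0 (u x) dl0) A0 eqA.
have tail : Rintegral mu O (fun x => `|lam x|) <=
    Rintegral mu O (fun x => lam x * k x) + C * dl * fine (mu O).
  apply: Rintegral_norm_le_add_cst => //; first exact: integrableM_le1.
  by move=> x Ox; exact: normr_le_mul_clip (lam_u x Ox) C0 (lamC x Ox) dl0.
apply: le_trans (ler_wpM2l beta0 tail) _.
have -> : dl * (beta * (C * fine (mu O))) = beta * (C * dl * fine (mu O)) by ring.
by rewrite mulrDr lerD.
Qed.

End FiniteMeasureIntegration.

Lemma clip_test_function (R : realType) (d : nat)
    (mu : {measure set (d.-tuple R) -> \bar R}) (O : set (d.-tuple R))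
    (V : normedModType R) (ip : V -> V -> R) (iota : V -> d.-tuple R -> R) :
  inner_product_of ip -> compact_dense_embedding mu O iota ->
  assumption_T mu O ip iota ->
  forall (u : V) (dl : R), 0 < dl -> exists v : V,
    {ae mu, forall x, O x -> iota v x = clip (iota u x / dl)} /\ 0 <= ip u v.
Proof.
move=> [ipD _ _] [_ iotaD _ _ _] [clipT _ _] u dl dl0.
have [v [vE normv_le]] := clipT (dl^-1 *: u).
have iota0 : {ae mu, forall x, O x -> iota 0 x = 0}.
  by apply: filterS (iotaD 1 0 0) => x h Ox; move: (h Ox); rewrite scale1r addr0 mul1r; lra.
have iotaZ : {ae mu, forall x, O x -> iota (dl^-1 *: u) x = iota u x / dl}.
  apply: filterS2 (iotaD dl^-1 u 0) iota0 => x h1 h2 Ox.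
  by rewrite -[_ *: u]addr0 h1 // h2 // addr0 mulrC.
exists v; split; first by apply: filterS2 vE iotaZ => x h1 h2 Ox; rewrite h1 // h2.
have ip0 w : ip 0 w = 0 by move: (ipD 1 0 0 w); rewrite scale1r addr0 mul1r; lra.
move: normv_le; rewrite -[_ *: u]addr0 ipD ip0 addr0 => normv_le.
have : 0 <= dl^-1 * ip u v by apply: le_trans normv_le; exact: sqr_ge0.
by rewrite pmulr_rge0 // invr_gt0.
Qed.

Theorem lemma5p7 (R : realType) (d : nat)
    (mu : {measure set (d.-tuple R) -> \bar R}) (O : set (d.-tuple R))
    (V : completeNormedModType R) (ip : V -> V -> R)
    (iota : V -> d.-tuple R -> R) (F : V -> R) (alpha beta p : R)
    (ubar : V) (eps : R) (ueps : V) (g : d.-tuple R -> R) :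
  bounded_lipschitz_domain O ->
  is_lebesgue_measure mu ->
  inner_product_of ip ->
  compact_dense_embedding mu O iota ->
  weakly_lsc ip F -> affine_minorant ip F -> C1_frechet F ->
  0 < alpha -> 0 < beta -> 0 < p < 1 ->
  (* Assumption (T) *)
  assumption_T mu O ip iota ->
  0 < eps ->
  (* optimality system for ueps *)
  (forall v : V,
     alpha * ip ueps v + beta * dG_eps mu O p eps (iota ueps) (iota v)
     + Rintegral mu O (fun x => (iota ueps x - iota ubar x) * iota v x)
     = - 'd F ueps v) ->
  (* F'(ueps) is represented by g in L^1(O) *)
  measurable_fun O g -> mu.-integrable O (EFin \o g) ->
  (forall v : V, (exists M : R, {ae mu, forall x, O x -> `|iota v x| <= M}) ->
     'd F ueps v = Rintegral mu O (fun x => g x * iota v x)) ->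
  let lambda := fun x => 2 * iota ueps x * dpsi_eps p eps (iota ueps x ^+ 2) in
  beta * Rintegral mu O (fun x => `|lambda x|)
  <= Rintegral mu O (fun x => `|g x|) + Rintegral mu O (fun x => `|iota ubar x|).
Proof.
move=> [oO bO _ _] lebesgue ipV embed _ _ _ alpha0 beta0 /andP[p0 _] hT _
  optimality mg intg represent /=.
have mO := eopen_measurable oO; have Ofin := ebounded_measure_lty lebesgue bO mO.
have [L2 _ _ _ _] := embed; have mu_ := (L2 ueps).1.
have mlambda : measurable_fun O
    (fun x => 2 * iota ueps x * dpsi_eps p eps (iota ueps x ^+ 2)).
  apply: measurable_funM; first exact: measurable_funM.
  by apply: measurableT_comp (measurable_dpsi_eps p eps) _; exact: measurable_funX.
apply: (le_Rintegral_norm_of_clip_tests mO Ofin (C := p * eps `^ (p - 2))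
  (u := iota ueps)) => //.
- exact: ltW.
- by rewrite mulr_ge0 ?powR_ge0 ?ltW.
- exact: (L2 ubar).1.
- exact: L2fun_integrable.
- exact: L2fun_integrable.
- by move=> x _; apply: mul_dpsi_eps_ge0; exact: ltW.
- by move=> x _; apply: normr_dpsi_eps_le; exact: ltW.
move=> dl dl0; have [v [vk ip_ge0]] := clip_test_function ipV embed hT ueps dl0.
exists (alpha * ip ueps v); first exact: mulr_ge0 (ltW alpha0) ip_ge0.
have mv := (L2 v).1; have mk : measurable_fun O (fun x => clip (iota ueps x / dl)).
  by apply: measurableT_comp (@measurable_clip R) _; exact: measurable_funM.
have := optimality v; rewrite represent; last first.
  by exists 1; apply: filterS vk => x vkx Ox; rewrite vkx //; exact: normr_clip_le1.
rewrite /dG_eps !(ae_eq_RintegralMr mO _ mv mk vk) //.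
exact: measurable_funB mu_ (L2 ubar).1.
Qed.
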